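(* For $k\ge0$, let $S_k$ be the star signed graph with $k+1$ vertices and $k$ positive edges (all joining one center vertex to the $k$ other vertices). Then $X_{S_k}=\sum_{i=0}^k(-1)^i\binom{k}{i}p_{1,0}^{k-i}\,p_{i+1,0}$.
   Context: For a signed graph $\Sigma$ (finite graph with edge signs $\mathrm{sgn}(e)\in\{+,-\}$), a coloring $\kappa:V(\Sigma)\to\mathbb{Z}$ is proper if $\kappa(u)\ne\mathrm{sgn}(e)\kappa(v)$ for every edge $e$ with endpoints $u,v$, and $X_\Sigma=\sum_{\kappa\text{ proper}}\prod_{v}x_{\kappa(v)}$ in commuting variables $x_i$, $i\in\mathbb{Z}$. $p_{a,b}=\sum_{i\in\mathbb{Z}}x_i^ax_{-i}^b$. *)

From HB Require Import structures.
From mathcomp Require Import all_boot all_order all_algebra.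
From mathcomp Require Import mpoly.
Set Implicit Arguments. Unset Strict Implicit. Unset Printing Implicit Defensive.
Import Order.TTheory GRing.Theory Num.Theory.
Local Open Scope ring_scope.

(* A finite signed graph (loops and multiple edges allowed):
   vertices sV, edges sE, endpoints of each edge, and sign
   (true = positive, false = negative). *)
Record sgraph := SGraph {
  sV : finType;
  sE : finType;
  sends : sE -> sV * sV;
  ssgn : sE -> bool }.

Definition sgnz (b : bool) : int := if b then 1 else -1.

Definition proper (G : sgraph) (kappa : sV G -> int) : bool :=
  [forall e : sE G, kappa (sends e).1 != sgnz (ssgn e) * kappa (sends e).2].

(* Truncation to the variables x_{-N}, ..., x_N (all other x_i set to 0).
   The variable 'X_c, c : 'I_(2N+1), stands for x_{c - N}. *)
Definition nvars (N : nat) : nat := (N.*2).+1.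
Definition colval (N : nat) (c : 'I_(nvars N)) : int := (c : nat)%:Z - N%:Z.

(* Truncated chromatic symmetric function X_Sigma(x_{-N},...,x_N, 0, 0, ...). *)
Definition XSigmaN (G : sgraph) (N : nat) : {mpoly int[nvars N]} :=
  \sum_(kappa : {ffun sV G -> 'I_(nvars N)} | proper (fun v => colval (kappa v)))
     \prod_(v : sV G) 'X_(kappa v).

(* Truncated p_{a,b} = sum_{i in Z} x_i^a x_{-i}^b ; rev_ord c stands for x_{-(c-N)}. *)
Definition pN (N a b : nat) : {mpoly int[nvars N]} :=
  \sum_(c : 'I_(nvars N)) 'X_c ^+ a * 'X_(rev_ord c) ^+ b.

Definition star (k : nat) : sgraph :=
  @SGraph 'I_k.+1 'I_k (fun e => (ord0, lift ord0 e)) (fun _ => true).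

From HB Require Import structures.
From mathcomp Require Import all_boot all_order all_algebra.
From mathcomp Require Import mpoly ring.
Set Implicit Arguments. Unset Strict Implicit. Unset Printing Implicit Defensive.
Import Order.TTheory GRing.Theory Num.Theory.
Local Open Scope ring_scope.

(* A proper colouring of the star gives the center some colour c and every
   leaf a colour other than c, so X_{S_k} = sum_c x_c (p_{1,0} - x_c)^k.
   Expanding the k-th power binomially and summing over c turns each
   x_c^{i+1} into p_{i+1,0}. *)

Lemma prodr_if0 (R : comPzSemiRingType) (I : finType) (P : pred I)
    (F : I -> R) :
  \prod_i (if P i then F i else 0) = if [forall i, P i] then \prod_i F i else 0.
Proof.
have [/forallP allP | /forallPn[i notPi]] := boolP [forall i, P i].
  by apply: eq_bigr => i _; rewrite allP.
by rewrite (bigD1 i) //= ifN ?mul0r.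
Qed.

Section StarColorings.
Variables (R : comPzRingType) (T : finType) (k : nat) (F : T -> R).

Definition star_proper (f : {ffun 'I_k.+1 -> T}) : bool :=
  [forall e : 'I_k, f (lift ord0 e) != f ord0].

(* Colour d is allowed at the center iff d = c, and at a leaf iff d <> c. *)
Definition star_weight (c : T) (v : 'I_k.+1) (d : T) : R :=
  if (v == ord0) == (d == c) then F d else 0.

Lemma prod_sum_star_weight (c : T) :
  \prod_v \sum_d star_weight c v d = F c * (\sum_(d | d != c) F d) ^+ k.
Proof.
rewrite big_ord_recl /star_weight eqxx -big_mkcond big_pred1_eq; congr (_ * _).
rewrite -[k in RHS]card_ord -prodr_const; apply: eq_bigr => e _.
by rewrite lift_eqF -big_mkcond.
Qed.

Lemma prod_star_weight (c : T) (f : {ffun 'I_k.+1 -> T}) :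
  \prod_v star_weight c v (f v) =
  if (f ord0 == c) && star_proper f then \prod_v F (f v) else 0.
Proof.
rewrite prodr_if0; congr (if _ then _ else _).
apply/forallP/andP => [fP | [/eqP f0c /forallP fP] v].
  have f0c : f ord0 = c by have := fP ord0; rewrite eqxx eq_sym eqb_id => /eqP.
  split; first exact/eqP.
  apply/forallP => e; rewrite f0c.
  by have := fP (lift ord0 e); rewrite lift_eqF.
case: (unliftP ord0 v) => [e ->|->]; last by rewrite f0c !eqxx.
by rewrite lift_eqF -f0c (negbTE (fP e)).
Qed.

Lemma sum_star_proper :
  \sum_(f | star_proper f) \prod_v F (f v) =
  \sum_c F c * (\sum_(d | d != c) F d) ^+ k.
Proof.
under [RHS]eq_bigr do rewrite -prod_sum_star_weight bigA_distr_bigA.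
rewrite exchange_big big_mkcond /=; apply: eq_bigr => f _.
rewrite (eq_bigr _ (fun c _ => prod_star_weight c f)).
rewrite -big_mkcond /=; case: (star_proper f); last first.
  by rewrite big_pred0 // => c; rewrite andbF.
by rewrite (big_pred1 (f ord0)) // => c; rewrite andbT eq_sym.
Qed.

End StarColorings.

Lemma mul_exprBn (R : pzRingType) (A : comAlgType R) (x s : A) (k : nat) :
  x * (s - x) ^+ k =
  \sum_(i < k.+1) ((-1) ^+ i * 'C(k, i)%:R) *: (s ^+ (k - i) * x ^+ i.+1).
Proof.
rewrite exprBn mulr_sumr; apply: eq_bigr => i _.
rewrite -mulr_algl -[_%:A]/(in_alg A _) rmorphM rmorphXn rmorphN1 rmorph_nat.
by rewrite -mulr_natr exprS; ring.
Qed.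

Lemma pN_0 (N a : nat) : pN N a 0 = \sum_c 'X_c ^+ a.
Proof. by apply: eq_bigr => c _; rewrite mulr1. Qed.

Lemma colval_inj (N : nat) : injective (@colval N).
Proof. by move=> a b /addIr /eqP; rewrite eqz_nat => /eqP /val_inj. Qed.

Lemma XSigmaN_star (k N : nat) :
  XSigmaN (star k) N =
  \sum_(f : {ffun 'I_k.+1 -> 'I_(nvars N)} | star_proper f) \prod_v 'X_(f v).
Proof.
apply: eq_bigl => f; apply: eq_forallb => e /=.
by rewrite /sgnz mul1r (inj_eq (@colval_inj N)) eq_sym.
Qed.

Theorem lemma6p4 (k N : nat) :
  XSigmaN (star k) N =
  \sum_(i < k.+1)
     ((-1) ^+ i * ('C(k, i))%:R) *: (pN N 1 0 ^+ (k - i) * pN N i.+1 0).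
Proof.
rewrite XSigmaN_star (sum_star_proper k (fun c => 'X_c)).
have sum_neq c :
    \sum_(d | d != c) 'X_d = pN N 1 0 - 'X_c :> {mpoly int[nvars N]}.
  rewrite pN_0; under [in RHS]eq_bigr do rewrite expr1.
  by rewrite [in RHS](bigD1 c) //= addrC addrK.
under eq_bigr do rewrite sum_neq mul_exprBn.
rewrite exchange_big /=; apply: eq_bigr => i _.
by rewrite (pN_0 N i.+1) mulr_sumr scaler_sumr.
Qed.
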